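(* Let $R$ be a commutative ring, let $n=2^m$ with $m\ge 0$, and let $A=\sum_{i=0}^{n-1}a_ix^i$ and $B=\sum_{i=0}^{n-1}b_ix^i$ be polynomials in $R[x]$. Consider the recursion tree for the product $AB$ built with the interleaved splitting scheme (described in the context). Let $K$ be a direct leaf node, reached from the root by the path with labels $d_1d_2\dots d_m$, where every $d_i\in\{0,1\}$ ($d_1$ is the label of the edge leaving the root). Then the contribution of $K$ is $$\frac{1-x^{2^m}}{1-x}\,a_r b_r\,x^r,\qquad\text{where } r=\sum_{i=1}^m d_i 2^{i-1},$$ i.e. $r$ is the integer whose binary expansion is $d_m d_{m-1}\dots d_2d_1$. Here $\frac{1-x^{2^m}}{1-x}$ denotes the polynomial $1+x+\dots+x^{2^m-1}$.
   Context: Recursion tree. Each node carries a triple $(P,Q,X)$, where $X=x^{2^{i}}$ at depth $i$ and $P,Q$ are polynomials in $X$; the root is $(A,B,x)$. For a node $(P,Q,X)$ at depth $i<m$, write $P=P_1X+P_0$ and $Q=Q_1X+Q_0$, where $P_0,P_1,Q_0,Q_1$ are polynomials in $X^2$ (interleaved splitting: $P_0$ collects the monomials of $P$ whose exponent in $X$ is even, $P_1X$ those whose exponent is odd). Using the identity $PQ=(X+1)P_0Q_0+X(X+1)P_1Q_1-X(P_1-P_0)(Q_1-Q_0)$, the node has three children: the edge labelled 0 leads to $(P_0,Q_0,X^2)$ with edge weight $X+1$; the edge labelled 1 leads to $(P_1,Q_1,X^2)$ with edge weight $X(X+1)$; the edge labelled 2 leads to $(P_1-P_0,Q_1-Q_0,X^2)$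 with edge weight $-X$. Nodes at depth $m$ are leaves; their $P,Q$ are constants. The contribution of a leaf is the product of the edge weights along the path from the root to it, multiplied by the product $PQ$ of the two constants it carries. $AB$ is the sum of the contributions of all leaves. A node is direct if the path from the root to it contains no edge labelled 2. *)

From mathcomp Require Import all_boot all_order all_algebra.
Set Implicit Arguments. Unset Strict Implicit. Unset Printing Implicit Defensive.
Import GRing.Theory.
Local Open Scope ring_scope.

(* A node at depth i carries (P, Q, X) with X = x^(2^i); P and Q are
   polynomials in X, represented here as elements of {poly R} in an abstract
   variable standing for X.  Writing P = P1 X + P0 with P0, P1 polynomials in
   X^2, we have P0 = even_poly P and P1 = odd_poly P (both as polynomials in
   the variable standing for X^2). *)

Section Tree.
Variable R : comNzRingType.

Definition child_P (l : 'I_3) (P : {poly R}) : {poly R} :=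
  match val l with
  | 0 => even_poly P
  | 1 => odd_poly P
  | _ => odd_poly P - even_poly P
  end.

Definition edge_weight (l : 'I_3) : {poly R} :=
  match val l with
  | 0 => 'X + 1
  | 1 => 'X * ('X + 1)
  | _ => - 'X
  end.

(* Contribution (as a polynomial in x) of the leaf reached from the node
   (P, Q, x^(2^i)) at depth i by following the labels d: the product of the
   edge weights along the path (each weight evaluated at X = x^(2^j) for the
   depth j of its source node), times the product P*Q carried by the leaf
   (P, Q being polynomials in x^(2^(i + size d)), constant at the leaves). *)
Fixpoint contrib (i : nat) (P Q : {poly R}) (d : seq 'I_3) : {poly R} :=
  match d with
  | [::] => (P * Q) \Po 'X^(2 ^ i)
  | l :: d' => (edge_weight l \Po 'X^(2 ^ i))
                 * contrib i.+1 (child_P l P) (child_P l Q) d'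
  end.

Definition leaf_contrib (A B : {poly R}) (d : seq 'I_3) : {poly R} :=
  contrib 0 A B d.

Definition direct (d : seq 'I_3) : bool := all (fun l : 'I_3 => val l < 2)%N d.

End Tree.

(** Along a direct path the polynomials only ever get split, never
    subtracted, so the leaf reached by labels [d_1 ... d_m] carries the
    constants [a_r] and [b_r] with [r] the binary number [d_m ... d_1].
    Going down one direct edge labelled [d] multiplies by
    [(X + 1) X^d] and substitutes [X := x^2] in the rest of the path, and
    [(x + 1) (1 + x^2 + ... + x^(2(2^k - 1))) = 1 + x + ... + x^(2^(k+1) - 1)]
    makes the edge weights telescope into the geometric sum. *)

From mathcomp Require Import all_boot all_order all_algebra.
From mathcomp Require Import ring.
Import GRing.Theory.
Local Open Scope ring_scope.

Definition binary_index (d : seq 'I_3) : nat :=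
  (\sum_(i < size d) val (nth ord0 d i) * 2 ^ i)%N.

Lemma binary_index_cons l d :
  binary_index (l :: d) = (l + (binary_index d).*2)%N.
Proof.
rewrite /binary_index /= big_ord_recl /= muln1 -mul2n big_distrr /=.
by congr (_ + _)%N; apply: eq_bigr => j _; rewrite expnS mulnCA.
Qed.

Lemma geom_sum_double (R : pzSemiRingType) (x : R) n :
  \sum_(j < n.*2) x ^+ j = (1 + x) * \sum_(k < n) x ^+ k.*2.
Proof.
elim: n => [|n IH]; first by rewrite !big_ord0 mulr0.
rewrite doubleS !big_ord_recr /= IH mulrDr -addrA; congr (_ + _).
by rewrite mulrDl mul1r -exprS.
Qed.

Lemma geom_sumX_pow2S (R : nzSemiRingType) m :
  \sum_(j < 2 ^ m.+1) 'X^j =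
    ('X + 1) * ((\sum_(j < 2 ^ m) 'X^j) \Po 'X^2) :> {poly R}.
Proof.
rewrite expnS mul2n geom_sum_double addrC raddf_sum /=; congr (_ * _).
by apply: eq_bigr => k _; rewrite comp_Xn_poly -exprM mulnC muln2.
Qed.

Section DirectLeaves.
Variable R : comNzRingType.
Implicit Types (P Q A B : {poly R}) (l : 'I_3) (d : seq 'I_3).

Lemma contrib_comp i P Q d :
  contrib i P Q d = contrib 0 P Q d \Po 'X^(2 ^ i).
Proof.
elim: d i P Q => [|l d IH] i P Q /=; first by rewrite expr1 comp_polyXr.
rewrite IH (IH 1%N) comp_polyM !expr1 comp_polyXr -comp_polyA comp_Xn_poly.
by rewrite -exprM -expnSr.
Qed.

Lemma leaf_contrib_cons A B l d :
  leaf_contrib A B (l :: d) =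
    edge_weight R l * (leaf_contrib (child_P l A) (child_P l B) d \Po 'X^2).
Proof. by rewrite /leaf_contrib /= contrib_comp expr1 comp_polyXr. Qed.

Lemma edge_weight_direct l : (l < 2)%N -> edge_weight R l = ('X + 1) * 'X^l.
Proof.
by case: l => [[|[|l]] ?] //= _; rewrite /edge_weight /=; ring.
Qed.

Lemma coef_child_direct l P k :
  (l < 2)%N -> (child_P l P)`_k = P`_(l + k.*2).
Proof.
by case: l => [[|[|l]] ?] //= _; rewrite /child_P /= (coef_even_poly, coef_odd_poly).
Qed.

Lemma size_child_direct l P n :
  (l < 2)%N -> (size P <= 2 ^ n.+1)%N -> (size (child_P l P) <= 2 ^ n)%N.
Proof.
rewrite expnS mul2n; case: l => [[|[|l]] ?] //= _ sizeP; rewrite /child_P /=.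
- by rewrite (leq_trans (size_even_poly _)) // leq_uphalf_double.
- by rewrite (leq_trans (size_odd_poly _)) // leq_half_double leqW.
Qed.

Lemma leaf_contrib_direct A B d :
  direct d -> (size A <= 2 ^ size d)%N -> (size B <= 2 ^ size d)%N ->
  let r := binary_index d in
  leaf_contrib A B d = (\sum_(j < 2 ^ size d) 'X^j) * (A`_r * B`_r)%:P * 'X^r.
Proof.
elim: d A B => [|l d IH] A B /=.
  move=> _ sizeA sizeB; rewrite /binary_index big_ord1 big_ord0 mul1r mulr1.
  rewrite /leaf_contrib /= expr1 comp_polyXr.
  by rewrite (size1_polyC sizeA) (size1_polyC sizeB) -polyCM !coefC.
move=> /andP[direct_l direct_d] sizeA sizeB.
rewrite leaf_contrib_cons IH ?size_child_direct // !coef_child_direct //.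
rewrite binary_index_cons edge_weight_direct // geom_sumX_pow2S.
rewrite !comp_polyM comp_polyC comp_Xn_poly -exprM mul2n exprD.
ring.
Qed.

End DirectLeaves.

Theorem lemma1 (R : comNzRingType) (m : nat) (A B : {poly R}) (d : seq 'I_3) :
  (size A <= 2 ^ m)%N -> (size B <= 2 ^ m)%N ->
  size d = m -> direct d ->
  let r := (\sum_(i < m) val (nth ord0 d i) * 2 ^ i)%N in
  leaf_contrib A B d =
    (\sum_(j < 2 ^ m) 'X^j) * (A`_r * B`_r)%:P * 'X^r.
Proof.
move=> sizeA sizeB size_d direct_d; subst m.
exact: leaf_contrib_direct.
Qed.
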